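(* Consider the planner's problem \[ \min_{p,q,\omega\in\mathbb{R}^n,\ \theta\in\mathbb{R}^n}\ \sum_{j=1}^n J_j(p_j)+\tfrac12\omega^TD\omega \] subject to (with $\tilde\theta:=C^T\theta$) \[ q=p,\qquad \mathbf 1^T(q-d)=0,\qquad H^T(q-d)\le F,\qquad q-d-D\omega-CB\tilde\theta=0, \] and the problem \[ \text{(P2)}\quad \min_{q\in\mathbb{R}^{n}} \ \sum_{j=1}^{n} J_j(q_j) \quad\text{s.t.}\quad \mathbf 1^T(q-d)=0,\quad H^T(q-d)\le F . \] Then $(p^*,q^*,\omega^*,\tilde\theta^* )$ is an optimal solution to the planner's problem if and only if $p^*=q^*$, $\omega^*=0$, $\tilde\theta^*=C^TL^\dagger(q^*-d)$, and $q^*$ is an optimal solution to (P2).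
   Context: A power network is a connected directed graph $(\mathcal N,\mathcal E)$ with $\mathcal N=\{1,\dots,n\}$ (if $(j,k)\in\mathcal E$ then $(k,j)\notin\mathcal E$). $C\in\mathbb{R}^{n\times|\mathcal E|}$ is the incidence matrix: $C_{j,e}=1$ if $e=(j,k)\in\mathcal E$, $C_{j,e}=-1$ if $e=(k,j)\in\mathcal E$, $0$ otherwise. $B$ is an $|\mathcal E|\times|\mathcal E|$ diagonal matrix with positive diagonal entries; $D$ is an $n\times n$ diagonal matrix with positive diagonal entries. $L:=CBC^T$, $L^\dagger$ its Moore–Penrose inverse, and $H\in\mathbb{R}^{n\times2|\mathcal E|}$ is defined by $H^T=\begin{bmatrix} BC^TL^\dagger\\ -BC^TL^\dagger\end{bmatrix}$. $F:=\begin{bmatrix}\overline F\\ -\underline F\end{bmatrix}$ for given line limits $\underline F,\overline F\in\mathbb{R}^{|\mathcal E|}$. $d\in\mathbb{R}^n$ is given; each $J_j:\mathbb{R}\to\mathbb{R}$ is strictly convex and twice differentiable. *)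

From HB Require Import structures.
From mathcomp Require Import all_boot all_order all_algebra.
From mathcomp Require Import all_classical all_reals.
From mathcomp Require Import topology normedtype derive.
Set Implicit Arguments. Unset Strict Implicit. Unset Printing Implicit Defensive.
Import Order.TTheory GRing.Theory Num.Theory.
Import numFieldNormedType.Exports.
Local Open Scope ring_scope.

Definition simple_digraph (n m : nat) (src tgt : 'I_m -> 'I_n) : Prop :=
  injective (fun e => (src e, tgt e)) /\
  (forall e e' : 'I_m, ~ (src e = tgt e' /\ tgt e = src e')).

Definition adj (n m : nat) (src tgt : 'I_m -> 'I_n) : rel 'I_n :=
  fun a b => [exists e, ((src e == a) && (tgt e == b)) || ((src e == b) && (tgt e == a))].

Definition graph_connected (n m : nat) (src tgt : 'I_m -> 'I_n) : Prop :=
  forall a b : 'I_n, connect (adj src tgt) a b.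

Definition incidence (R : pzRingType) (n m : nat) (src tgt : 'I_m -> 'I_n) : 'M[R]_(n, m) :=
  \matrix_(j, e) (if src e == j then 1 else if tgt e == j then -1 else 0).

(* Moore–Penrose inverse (real matrices: adjoint = transpose). *)
Definition is_MP_inverse (R : pzRingType) (k : nat) (A X : 'M[R]_k) : Prop :=
  [/\ A *m X *m A = A, X *m A *m X = X,
      (A *m X)^T = A *m X & (X *m A)^T = X *m A].

Definition strictly_convex (R : realType) (f : R -> R) : Prop :=
  forall x y t : R, x != y -> 0 < t -> t < 1 ->
    f (t * x + (1 - t) * y) < t * f x + (1 - t) * f y.

Definition twice_differentiable (R : realType) (f : R -> R) : Prop :=
  forall x : R, derivable f x 1 /\ derivable (derive1 f) x 1.

Definition vle (R : numDomainType) (k : nat) (u v : 'cV[R]_k) : Prop :=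
  forall i, u i 0 <= v i 0.

Definition planner_feasible (R : realType) (n m : nat) (C : 'M[R]_(n, m))
  (B : 'M[R]_m) (D : 'M[R]_n) (HT : 'M[R]_(m + m, n)) (F : 'cV[R]_(m + m))
  (d p q w : 'cV[R]_n) (tht : 'cV[R]_m) : Prop :=
  [/\ exists th : 'cV[R]_n, tht = C^T *m th,
      q = p,
      (const_mx 1 : 'rV[R]_n) *m (q - d) = 0,
      vle (HT *m (q - d)) F
    & q - d - D *m w - C *m B *m tht = 0].

Definition planner_obj (R : realType) (n : nat) (J : 'I_n -> R -> R)
  (D : 'M[R]_n) (p w : 'cV[R]_n) : R :=
  \sum_(j < n) J j (p j 0) + 2^-1 * (w^T *m D *m w) 0 0.

Definition planner_optimal (R : realType) (n m : nat) (J : 'I_n -> R -> R)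
  (C : 'M[R]_(n, m)) (B : 'M[R]_m) (D : 'M[R]_n) (HT : 'M[R]_(m + m, n))
  (F : 'cV[R]_(m + m)) (d p q w : 'cV[R]_n) (tht : 'cV[R]_m) : Prop :=
  planner_feasible C B D HT F d p q w tht /\
  forall p' q' w' (tht' : 'cV[R]_m),
    planner_feasible C B D HT F d p' q' w' tht' ->
    planner_obj J D p w <= planner_obj J D p' w'.

Definition P2_feasible (R : realType) (n m : nat) (HT : 'M[R]_(m + m, n))
  (F : 'cV[R]_(m + m)) (d q : 'cV[R]_n) : Prop :=
  (const_mx 1 : 'rV[R]_n) *m (q - d) = 0 /\ vle (HT *m (q - d)) F.

Definition P2_optimal (R : realType) (n m : nat) (J : 'I_n -> R -> R)
  (HT : 'M[R]_(m + m, n)) (F : 'cV[R]_(m + m)) (d q : 'cV[R]_n) : Prop :=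
  P2_feasible HT F d q /\
  forall q', P2_feasible HT F d q' ->
    \sum_(j < n) J j (q j 0) <= \sum_(j < n) J j (q' j 0).

From HB Require Import structures.
From mathcomp Require Import all_boot all_order all_algebra.
From mathcomp Require Import all_classical all_reals.
From mathcomp Require Import topology normedtype derive.
From mathcomp Require Import ring lra.
Set Implicit Arguments. Unset Strict Implicit. Unset Printing Implicit Defensive.
Import Order.TTheory GRing.Theory Num.Theory.
Import numFieldNormedType.Exports.
Local Open Scope ring_scope.

(* The swing equation q - d - D w - C B th~ = 0 has a solution with w = 0
   whenever 1^T (q - d) = 0: since the network is connected, the kernel of
   the Laplacian L = C B C^T is spanned by 1, so L L^+ is the projection onto
   1^perp and th~ = C^T L^+ (q - d) works.  Any feasible point with the same
   q and w = 0 has a smaller objective, because w^T D w > 0 for w <> 0; hence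
   an optimum has w = 0, after which the planner's objective is the (P2)
   objective and the constraints on q are those of (P2).  Finally, th~ = C^T th
   is determined by L th = q - d, since ker L is contained in ker C^T. *)

Lemma diag_mx_quadE (R : comPzRingType) k (c : 'I_k -> R) (u : 'cV[R]_k) :
  (u^T *m diag_mx (\row_i c i) *m u) 0 0 = \sum_i c i * u i 0 ^+ 2.
Proof. by rewrite mul_mx_diag !mxE; apply: eq_bigr => i _; rewrite !mxE; ring. Qed.

Lemma diag_mx_quad_ge0 (R : realDomainType) k (c : 'I_k -> R) (u : 'cV[R]_k) :
  (forall i, 0 < c i) -> 0 <= (u^T *m diag_mx (\row_i c i) *m u) 0 0.
Proof.
move=> c_gt0; rewrite diag_mx_quadE; apply: sumr_ge0 => i _.
by rewrite mulr_ge0 ?sqr_ge0 ?ltW.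
Qed.

Lemma diag_mx_quad_eq0 (R : realDomainType) k (c : 'I_k -> R) (u : 'cV[R]_k) :
  (forall i, 0 < c i) -> (u^T *m diag_mx (\row_i c i) *m u) 0 0 = 0 -> u = 0.
Proof.
move=> c_gt0; rewrite diag_mx_quadE => /psumr_eq0P sum0.
apply/matrixP => i j; rewrite (ord1 j) mxE.
have /eqP : c i * u i 0 ^+ 2 = 0.
  by apply: sum0 => // l _; rewrite mulr_ge0 ?sqr_ge0 ?ltW.
by rewrite mulf_eq0 (gt_eqF (c_gt0 i)) sqrf_eq0 => /eqP.
Qed.

Lemma trmx_mulmx_self_eq0 (R : realDomainType) k (u : 'cV[R]_k) :
  (u^T *m u) 0 0 = 0 -> u = 0.
Proof.
move=> uu0; apply: (@diag_mx_quad_eq0 _ _ (fun=> 1)) => //.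
rewrite -[RHS]uu0 diag_mx_quadE mxE.
by apply: eq_bigr => i _; rewrite mxE; ring.
Qed.

Lemma mulmx_diag_trmx_eq0 (R : realDomainType) k l (A : 'M[R]_(k, l))
    (c : 'I_l -> R) (y : 'cV[R]_k) :
  (forall i, 0 < c i) -> A *m diag_mx (\row_i c i) *m A^T *m y = 0 ->
  A^T *m y = 0.
Proof.
move=> c_gt0 Ay0; apply: (diag_mx_quad_eq0 (u := A^T *m y) c_gt0).
by rewrite trmx_mul trmxK !mulmxA -!(mulmxA y^T) Ay0 mulmx0 mxE.
Qed.

Lemma const_cV_orth (R : comPzRingType) k (y x : 'cV[R]_k) :
  (forall a c, y a 0 = y c 0) -> (const_mx 1 : 'rV[R]_k) *m x = 0 ->
  (y^T *m x) 0 0 = 0.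
Proof.
move=> y_const sum_x0; rewrite mxE.
case: (pickP (@predT 'I_k)) => [a _ | k0]; last by rewrite big1 // => i; have := k0 i.
transitivity (y a 0 * ((const_mx 1 : 'rV[R]_k) *m x) 0 0).
  rewrite mxE mulr_sumr; apply: eq_bigr => i _.
  by rewrite !mxE (y_const i a) mul1r.
by rewrite sum_x0 mxE mulr0.
Qed.

Section MoorePenrose.

Variables (R : realDomainType) (k : nat) (A X : 'M[R]_k).
Hypothesis AX_MP : is_MP_inverse A X.

(* [y := x - A X x] lies in [ker A^T] and is orthogonal to [A X x], so
   [y^T y = y^T x = 0]. *)
Lemma MP_inverse_proj_id (x : 'cV[R]_k) :
  (forall y : 'cV[R]_k, A^T *m y = 0 -> (y^T *m x) 0 0 = 0) -> A *m X *m x = x.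
Proof.
case: AX_MP => AXA _ AX_sym _ x_orth.
set P := A *m X in AX_sym *; set y := x - P *m x.
have PP : P *m P = P by rewrite /P mulmxA AXA.
have ATy0 : A^T *m y = 0.
  have ATP : A^T *m P = A^T by rewrite -AX_sym -trmx_mul AXA.
  by rewrite /y mulmxBr mulmxA ATP subrr.
have Py0 : P *m y = 0 by rewrite /y mulmxBr mulmxA PP subrr.
have yy0 : (y^T *m y) 0 0 = 0.
  have yTP0 : y^T *m P = 0 by rewrite -AX_sym -trmx_mul Py0 trmx0.
  by rewrite {2}/y mulmxBr mulmxA yTP0 mul0mx subr0 x_orth.
apply/eqP; rewrite eq_sym -subr_eq0 -/y.
by rewrite (trmx_mulmx_self_eq0 yy0).
Qed.

Lemma MP_inverse_ker_cancel l (M : 'M[R]_(l, k)) (th : 'cV[R]_k) :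
  (forall y : 'cV[R]_k, A *m y = 0 -> M *m y = 0) -> M *m X *m (A *m th) = M *m th.
Proof.
case: AX_MP => AXA _ _ _ kerAM.
have : A *m (th - X *m (A *m th)) = 0.
  by rewrite mulmxBr !mulmxA AXA subrr.
move=> /kerAM; rewrite mulmxBr => /eqP; rewrite subr_eq0 => /eqP ->.
by rewrite !mulmxA.
Qed.

End MoorePenrose.

Lemma incidence_trmx_mulE (R : pzRingType) n m (src tgt : 'I_m -> 'I_n)
    (y : 'cV[R]_n) e :
  src e != tgt e ->
  ((incidence R src tgt)^T *m y) e 0 = y (src e) 0 - y (tgt e) 0.
Proof.
move=> src_tgt; rewrite mxE (bigD1 (src e)) //= (bigD1 (tgt e)) 1?eq_sym //=.
rewrite big1 ?addr0 => [|j /andP[j_src j_tgt]].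
  by rewrite !mxE !eqxx (negbTE src_tgt) mul1r mulN1r.
by rewrite !mxE eq_sym (negbTE j_src) eq_sym (negbTE j_tgt) mul0r.
Qed.

Lemma incidence_trmx_ker_const (R : pzRingType) n m (src tgt : 'I_m -> 'I_n)
    (y : 'cV[R]_n) :
  graph_connected src tgt -> (incidence R src tgt)^T *m y = 0 ->
  forall a c, y a 0 = y c 0.
Proof.
move=> conn Cy0.
have y_edge e : y (src e) 0 = y (tgt e) 0.
  have [-> //|src_tgt] := eqVneq (src e) (tgt e).
  by apply/eqP; rewrite -subr_eq0 -incidence_trmx_mulE // Cy0 mxE.
move=> a c; have /connectP[s walk ->] := conn a c.
elim: s a walk => [|a' s IHs] a //= /andP[/existsP[e edge_e] walk].
by rewrite -(IHs a' walk); case/orP: edge_e => /andP[/eqP <- /eqP <-].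
Qed.

Lemma planner_obj_w0 (R : realType) n (J : 'I_n -> R -> R) (D : 'M[R]_n)
    (q : 'cV[R]_n) :
  planner_obj J D q 0 = \sum_j J j (q j 0).
Proof. by rewrite /planner_obj mulmx0 mxE mulr0 addr0. Qed.

Section Planner.

Variables (R : realType) (n m : nat) (src tgt : 'I_m -> 'I_n).
Variables (b : 'I_m -> R) (dD : 'I_n -> R) (Ldag : 'M[R]_n).
Variables (J : 'I_n -> R -> R) (HT : 'M[R]_(m + m, n)) (F : 'cV[R]_(m + m)).
Variable d : 'cV[R]_n.

Hypothesis conn : graph_connected src tgt.
Hypothesis b_gt0 : forall e, 0 < b e.
Hypothesis dD_gt0 : forall j, 0 < dD j.

Local Notation C := (incidence R src tgt).
Local Notation B := (diag_mx (\row_e b e)).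
Local Notation D := (diag_mx (\row_j dD j)).
Local Notation L := (C *m B *m C^T).

Hypothesis Ldag_MP : is_MP_inverse L Ldag.

Lemma laplacian_ker (y : 'cV[R]_n) : L *m y = 0 -> C^T *m y = 0.
Proof. exact: mulmx_diag_trmx_eq0. Qed.

Lemma laplacian_proj_id (x : 'cV[R]_n) :
  (const_mx 1 : 'rV[R]_n) *m x = 0 -> L *m Ldag *m x = x.
Proof.
move=> sum_x0; apply: (MP_inverse_proj_id Ldag_MP) => y.
rewrite !trmx_mul trmxK tr_diag_mx !mulmxA => /laplacian_ker Cy0.
exact: const_cV_orth (incidence_trmx_ker_const conn Cy0) sum_x0.
Qed.

Lemma planner_feasible_of_P2 (q : 'cV[R]_n) :
  P2_feasible HT F d q ->
  planner_feasible C B D HT F d q q 0 (C^T *m Ldag *m (q - d)).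
Proof.
move=> [sum0 flow_q]; split => //.
  by exists (Ldag *m (q - d)); rewrite mulmxA.
by rewrite mulmx0 subr0 !mulmxA laplacian_proj_id // subrr.
Qed.

Lemma planner_optimal_P2 p q w tht :
  planner_optimal J C B D HT F d p q w tht ->
  [/\ p = q, w = 0, tht = C^T *m Ldag *m (q - d) & P2_optimal J HT F d q].
Proof.
move=> [[[th tht_th] q_p sum0 flow_q swing] opt].
have opt_P2 q' : P2_feasible HT F d q' ->
    planner_obj J D p w <= \sum_j J j (q' j 0).
  by move/planner_feasible_of_P2/opt; rewrite planner_obj_w0.
have w0 : w = 0.
  apply: (diag_mx_quad_eq0 dD_gt0); apply/eqP; rewrite eq_le diag_mx_quad_ge0 //.
  have := opt_P2 q (conj sum0 flow_q); rewrite /planner_obj q_p andbT.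
  by set Q := (_ 0 0); set S := (\sum_j _); lra.
have q_d : q - d = L *m th.
  by move/eqP: swing; rewrite w0 mulmx0 subr0 tht_th !mulmxA subr_eq0 => /eqP.
split => //.
  by rewrite q_d (MP_inverse_ker_cancel Ldag_MP) ?tht_th // => y /laplacian_ker.
split => [//|q' /opt_P2].
by rewrite w0 planner_obj_w0 q_p.
Qed.

Lemma P2_optimal_planner q :
  P2_optimal J HT F d q ->
  planner_optimal J C B D HT F d q q 0 (C^T *m Ldag *m (q - d)).
Proof.
move=> [feas_q opt]; split; first exact: planner_feasible_of_P2.
move=> p' q' w' tht' [_ q'_p' sum0 flow_q' _].
rewrite planner_obj_w0 /planner_obj -q'_p'.
have := opt q' (conj sum0 flow_q'); have := diag_mx_quad_ge0 w' dD_gt0; lra.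
Qed.

End Planner.

Theorem theorem1 (R : realType) (n m : nat) (src tgt : 'I_m -> 'I_n)
  (b : 'I_m -> R) (dD : 'I_n -> R) (Ldag : 'M[R]_n)
  (Fup Flow : 'cV[R]_m) (d : 'cV[R]_n) (J : 'I_n -> R -> R)
  (p q w : 'cV[R]_n) (tht : 'cV[R]_m) :
  simple_digraph src tgt ->
  graph_connected src tgt ->
  (forall e, 0 < b e) ->
  (forall j, 0 < dD j) ->
  let C : 'M[R]_(n, m) := incidence R src tgt in
  let B : 'M[R]_m := diag_mx (\row_e b e) in
  let D : 'M[R]_n := diag_mx (\row_j dD j) in
  let L : 'M[R]_n := C *m B *m C^T in
  is_MP_inverse L Ldag ->
  let HT : 'M[R]_(m + m, n) := col_mx (B *m C^T *m Ldag) (- (B *m C^T *m Ldag)) in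
  let F : 'cV[R]_(m + m) := col_mx Fup (- Flow) in
  (forall j, strictly_convex (J j)) ->
  (forall j, twice_differentiable (J j)) ->
  planner_optimal J C B D HT F d p q w tht <->
  [/\ p = q, w = 0, tht = C^T *m Ldag *m (q - d) & P2_optimal J HT F d q].
Proof.
move=> _ conn b_gt0 dD_gt0 C B D L Ldag_MP HT F _ _; split.
  exact: planner_optimal_P2.
by case=> -> -> ->; exact: P2_optimal_planner.
Qed.
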